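(* Let $p\geq 5$ be a prime and let $\mathcal{A}$ be a cyclotomic $S$-ring over $C_{3p}=C_3\times C_p$ such that $\mathrm{rk}(\mathcal{A}_{C_p})=2$ and $\mathcal{A}\neq\mathcal{A}_{C_3}\otimes\mathcal{A}_{C_p}$. Then $\mathcal{A}=\mathcal{A}_0$.
   Context: For a finite group $G$ with identity $e$ and $X\subseteq G$ write $\underline{X}=\sum_{x\in X}x$. An $S$-ring over $G$ is a subring $\mathcal{A}\subseteq\mathbb{Z}G$ spanned by $\{\underline{X}:X\in\mathcal{S}(\mathcal{A})\}$ for a partition $\mathcal{S}(\mathcal{A})$ of $G$ (basic sets) containing $\{e\}$ and closed under inversion; $\mathrm{rk}(\mathcal{A})=|\mathcal{S}(\mathcal{A})|$. A subgroup $U$ with $\underline{U}\in\mathcal{A}$ is an $\mathcal{A}$-subgroup, and then $\mathcal{A}_U$ is the $S$-ring over $U$ whose basic sets are the basic sets of $\mathcal{A}$ contained in $U$. For $K\leq\mathrm{Aut}(G)$, $\mathrm{Cyc}(K,G)$ is the $S$-ring whose basic sets are the orbits of $K$ on $G$; such $S$-rings are called cyclotomic. If $\mathcal{A}_1,\mathcal{A}_2$ are $S$-rings over $G_1,G_2$, the tensor product $\mathcal{A}_1\otimes\mathcal{A}_2$ is the $S$-ring over $G_1\times G_2$ with basic sets $X_1\times X_2$, $X_i\in\mathcal{S}(\mathcal{A}_i)$. Identify $\mathrm{Aut}(C_{3p})=\mathrm{Aut}(C_3)\times\mathrm{Aut}(C_p)$. Let $W_0$ be the subgroup of $\mathrm{Aut}(C_3)\times\mathrm{Aut}(C_p)$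 consisting of pairs $(\alpha,\beta)$ such that $\alpha$ is trivial if and only if $\beta$ lies in the subgroup of index $2$ of $\mathrm{Aut}(C_p)$ (the unique nontrivial subdirect product of $\mathrm{Aut}(C_3)$ and $\mathrm{Aut}(C_p)$), and let $\mathcal{A}_0=\mathrm{Cyc}(W_0,C_{3p})$. *)

From mathcomp Require Import all_boot all_fingroup all_solvable.
Set Implicit Arguments. Unset Strict Implicit. Unset Printing Implicit Defensive.
Local Open Scope group_scope.

(* Basic sets of the cyclotomic S-ring Cyc(K,G): the orbits of K <= Aut(G) on G
   (automorphisms of G are represented as permutations of gT, as in Aut G). *)
Definition cyc_basic (gT : finGroupType) (K : {set {perm gT}}) (G : {set gT})
  : {set {set gT}} := [set orbit 'P K x | x in G].

Definition restr_basic (gT : finGroupType) (S : {set {set gT}}) (U : {set gT})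
  : {set {set gT}} := [set X in S | X \subset U].

(* Tensor product over an internal direct product G = G1 x G2: the basic set
   X1 x X2 is identified with the set product X1 * X2 (bijective image). *)
Definition tensor_basic (gT : finGroupType) (S1 S2 : {set {set gT}})
  : {set {set gT}} := [set X1 * X2 | X1 in S1, X2 in S2].

(* W_0 <= Aut(G) for G = C3 x Cp: automorphisms s whose restriction to C3 is
   trivial iff their restriction to Cp lies in H, the subgroup of index 2 of
   Aut(Cp). *)
Definition W0 (gT : finGroupType) (G C3 Cp : {set gT}) (H : {set {perm gT}})
  : {set {perm gT}} :=
  [set s in Aut G | (restr_perm C3 s == 1) == (restr_perm Cp s \in H)].

From mathcomp Require Import all_boot all_fingroup all_solvable.
Set Implicit Arguments. Unset Strict Implicit. Unset Printing Implicit Defensive.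
Local Open Scope group_scope.

(* Restriction to the factors embeds Aut(C3 x Cp) into Aut C3 x Aut Cp.
   Rank 2 on Cp means that K is transitive on Cp^#, so K maps onto Aut Cp.
   If every restriction to C3 of an element of K is also the restriction of
   an element of K acting trivially on Cp, then K contains an element acting
   like k1 on C3 and like k2 on Cp for any k1, k2 in K; every K-orbit is
   then a product of orbits and Cyc(K, G) is a tensor product.  As
   |Aut C3| = 2, the remaining case is K meeting the kernel on Cp trivially
   with K mapping onto Aut C3: then |K| = p - 1, and the kernel of K on C3,
   of index 2, is mapped onto the unique subgroup of index 2 of the cyclic
   group Aut Cp.  This says precisely that K is contained in W0, a group of
   order at most p - 1. *)

Lemma Aut_astabs_char (gT : finGroupType) (G H : {group gT}) :
  H \char G -> Aut G \subset 'N(H | 'P).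
Proof.
case/andP=> _ /forall_inP chH; apply/subsetP=> a Aa; rewrite !inE.
by apply/subsetP=> x Hx; rewrite inE /= apermE (subsetP (chH a Aa)) ?imset_f.
Qed.

Lemma restr_perm_eq_in (T : finType) (S : {set T}) (s t : {perm T}) :
  s \in 'N(S | 'P) -> t \in 'N(S | 'P) ->
  restr_perm S s = restr_perm S t -> {in S, s =1 t}.
Proof.
by move=> Ns Nt eST x Sx; rewrite -(restr_permE Ns Sx) -(restr_permE Nt Sx) eST.
Qed.

Lemma card2_group_eq (gT : finGroupType) (A : {group gT}) (x y : gT) :
  #|A| = 2 -> x \in A -> y \in A -> (x == 1) = (y == 1) -> x = y.
Proof.
move=> cardA Ax Ay; have [-> /esym/eqP-> // | x1 /esym/negbT y1] := eqVneq x 1.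
have /cards1P[z defA] : #|A :\ 1| == 1%N.
  by have := cardsD1 1 A; rewrite group1 cardA add1n => -[<-].
have: x \in A :\ 1 /\ y \in A :\ 1 by rewrite !inE x1 y1 Ax Ay.
by rewrite defA => -[/set1P-> /set1P->].
Qed.

Lemma orbit_Aut1 (gT : finGroupType) (G : {group gT}) (K : {group {perm gT}}) :
  K \subset Aut G -> orbit 'P K 1 = [set 1].
Proof.
move=> sKAut; apply/setP=> x; rewrite inE.
apply/orbitP/eqP=> [[k Kk <-] | ->]; last by exists 1; rewrite ?group1 //= apermE perm1.
by rewrite /= apermE -(autmE (subsetP sKAut k Kk)) morph1.
Qed.

Lemma orbit_Aut_sub (gT : finGroupType) (G H : {group gT}) (K : {group {perm gT}}) x :
  H \char G -> K \subset Aut G -> x \in H -> orbit 'P K x \subset H.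
Proof.
move=> chH sKAut Hx; apply/subsetP=> _ /orbitP[k Kk <-].
have /astabsP/(_ x) := subsetP (Aut_astabs_char chH) k (subsetP sKAut k Kk).
by rewrite Hx.
Qed.

Lemma restr_cyc_basic (gT : finGroupType) (G H : {group gT}) (K : {group {perm gT}}) :
  H \char G -> K \subset Aut G ->
  restr_basic (cyc_basic K G) H = [set orbit 'P K x | x in H].
Proof.
move=> chH sKAut; apply/setP=> X; rewrite inE.
apply/idP/imsetP=> [/andP[/imsetP[x Gx ->] sXH] | [x Hx ->]].
  by exists x => //; apply: (subsetP sXH); apply: orbit_refl.
by rewrite /cyc_basic imset_f ?(subsetP (char_sub chH)) ?(orbit_Aut_sub chH).
Qed.

Lemma rank2_orbit (gT : finGroupType) (G H : {group gT})
    (K : {group {perm gT}}) b :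
  H \char G -> K \subset Aut G -> #|restr_basic (cyc_basic K G) H| = 2 ->
  b \in H^# -> orbit 'P K b = H^#.
Proof.
move=> chH sKAut rank2 Hb; rewrite restr_cyc_basic // in rank2.
set O := orbit 'P K in rank2 *.
have O1 : O 1 = [set 1] := orbit_Aut1 sKAut.
have neqO1 x : x != 1 -> O x != O 1.
  by move=> x1; apply: contra x1 => /eqP eqO; rewrite -in_set1 -O1 -eqO orbit_refl.
have /cards1P[X defX] : #|[set O x | x in H] :\ O 1| == 1%N.
  by have := cardsD1 (O 1) [set O x | x in H]; rewrite imset_f // rank2 add1n => -[<-].
have OX x : x \in H^# -> O x = X.
  by case/setD1P=> x1 Hx; apply/set1P; rewrite -defX !inE neqO1 ?imset_f.
have [b1 Hb'] := setD1P Hb.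
apply/eqP; rewrite eqEsubset; apply/andP; split; apply/subsetP=> x.
  move=> Obx; rewrite !inE (subsetP (orbit_Aut_sub chH sKAut Hb') x Obx) andbT.
  by apply: contraNneq (neqO1 b b1) => x1; apply/eqP/esym/orbit_eqP; rewrite -x1.
by move=> Hx; rewrite (OX b Hb) -(OX x Hx) orbit_refl.
Qed.

Lemma im_restr_perm_Aut (gT : finGroupType) (G H : {group gT}) (K : {group {perm gT}}) :
  H \char G -> K \subset Aut G -> #|restr_basic (cyc_basic K G) H| = 2 ->
  prime #|H| -> restr_perm H @* K = Aut H.
Proof.
move=> chH sKAut rank2 prH.
have nHK := subset_trans sKAut (Aut_astabs_char chH).
have /trivgPn[b Hb b1] : H :!=: 1 by rewrite -cardG_gt1 prime_gt1.
have H'b : b \in H^# by rewrite !inE b1.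
apply/eqP; rewrite eqEcard (subset_trans (morphimS _ sKAut)) ?restr_perm_Aut ?char_sub //=.
rewrite card_Aut_cyclic ?prime_cyclic // totient_prime // (cardsD1 1 H) group1.
rewrite -(rank2_orbit chH sKAut rank2 H'b).
apply: leq_trans (leq_imset_card (fun a : {perm gT} => a b) _); apply: subset_leq_card.
apply/subsetP=> _ /orbitP[k Kk <-]; rewrite /= apermE -(restr_permE (subsetP nHK k Kk) Hb).
by rewrite imset_f ?mem_morphim ?(subsetP nHK).
Qed.

Section DirectFactors.

Variables (gT : finGroupType) (G A B : {group gT}).
Hypotheses (chA : A \char G) (chB : B \char G) (defG : A * B = G).

Local Notation rA := (restr_perm A).
Local Notation rB := (restr_perm B).

Let nAAut := Aut_astabs_char chA.
Let nBAut := Aut_astabs_char chB.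

Lemma Aut_eq_restr s t : s \in Aut G -> t \in Aut G ->
  rA s = rA t -> rB s = rB t -> s = t.
Proof.
move=> As At eqA eqB; apply: (eq_Aut As At) => x; rewrite -defG => /mulsgP[u v Au Bv ->].
have [Gu Gv] := (subsetP (char_sub chA) u Au, subsetP (char_sub chB) v Bv).
rewrite (morphicP (Aut_morphic As)) // (morphicP (Aut_morphic At)) //.
rewrite (restr_perm_eq_in (subsetP nAAut s As) (subsetP nAAut t At) eqA Au).
by rewrite (restr_perm_eq_in (subsetP nBAut s As) (subsetP nBAut t At) eqB Bv).
Qed.

Variable K : {group {perm gT}}.
Hypothesis sKAut : K \subset Aut G.

Let nAK := subset_trans sKAut nAAut.
Let nBK := subset_trans sKAut nBAut.
Let sKA_Aut : rA @* K \subset Aut A :=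
  subset_trans (morphimS _ sKAut) (restr_perm_Aut (char_sub chA)).

Section Split.

Hypothesis splitK : rA @* K \subset rA @* (K :&: 'ker rB).

Lemma restr_split k1 k2 : k1 \in K -> k2 \in K ->
  exists2 k, k \in K & {in A, k =1 k1} /\ {in B, k =1 k2}.
Proof.
move=> Kk1 Kk2; have NA := subsetP nAK; have NB := subsetP nBK.
have /morphimP[c _ /setIP[Kc /mker rBc] rAc] : rA (k1 * k2^-1) \in rA @* (K :&: 'ker rB).
  by rewrite (subsetP splitK) ?mem_morphim ?groupM ?groupV ?NA.
exists (c * k2); first by rewrite groupM.
split; apply: restr_perm_eq_in; rewrite ?groupM ?NA ?NB //.
  by rewrite morphM ?NA // -rAc morphM ?groupV ?NA // morphV ?NA // mulgKV.
by rewrite morphM ?NB // rBc mul1g.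
Qed.

Lemma orbit_mulg u v : u \in A -> v \in B ->
  orbit 'P K (u * v) = orbit 'P K u * orbit 'P K v.
Proof.
move=> Au Bv; have [Gu Gv] := (subsetP (char_sub chA) u Au, subsetP (char_sub chB) v Bv).
have morphK k : k \in K -> k (u * v) = k u * k v.
  by move=> Kk; rewrite (morphicP (Aut_morphic (subsetP sKAut k Kk))).
apply/setP=> y; apply/idP/idP.
  case/orbitP=> k Kk <-; rewrite /= apermE morphK //.
  by apply: mem_mulg; apply: (mem_orbit 'P _ Kk).
case/mulsgP=> _ _ /orbitP[k1 Kk1 <-] /orbitP[k2 Kk2 <-] ->.
have [k Kk [kA kB]] := restr_split Kk1 Kk2.
by apply/orbitP; exists k; rewrite //= !apermE morphK // kA // kB.
Qed.

Lemma cyc_basic_tensor :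
  cyc_basic K G = tensor_basic (restr_basic (cyc_basic K G) A)
                               (restr_basic (cyc_basic K G) B).
Proof.
rewrite !restr_cyc_basic //; apply/setP=> X.
apply/imsetP/imset2P=> [[x] | [_ _ /imsetP[u Au ->] /imsetP[v Bv ->] ->]].
  rewrite -{1}defG => /mulsgP[u v Au Bv ->] ->.
  by exists (orbit 'P K u) (orbit 'P K v); rewrite ?imset_f ?orbit_mulg.
by exists (u * v); rewrite ?orbit_mulg // -defG mem_mulg.
Qed.

End Split.

Section NonTensor.

Hypothesis prime_AutA : prime #|Aut A|.
Hypothesis not_tensor :
  cyc_basic K G <> tensor_basic (restr_basic (cyc_basic K G) A)
                                (restr_basic (cyc_basic K G) B).

Lemma restr_ker_trivial : rA @* (K :&: 'ker rB) = 1.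
Proof.
have sXK : rA @* (K :&: 'ker rB) \subset rA @* K := morphimS _ (subsetIl _ _).
have [sAutX | <-] := prime_subgroupVti (rA @* (K :&: 'ker rB)) prime_AutA.
  by case: not_tensor; apply: cyc_basic_tensor; apply: subset_trans sKA_Aut sAutX.
by apply/esym/setIidPl; apply: subset_trans sXK sKA_Aut.
Qed.

Lemma restrA_onto : rA @* K = Aut A.
Proof.
have [sAutK | tiKA] := prime_subgroupVti (rA @* K) prime_AutA.
  by apply/eqP; rewrite eqEsubset sKA_Aut.
case: not_tensor; apply: cyc_basic_tensor.
by rewrite -(setIidPl sKA_Aut) tiKA sub1G.
Qed.

Lemma restrB_injective : {in K &, injective rB}.
Proof.
apply/(injmP (f := restrm_morphism nBK rB)); rewrite ker_restrm.
apply/subsetP=> k kerBk; have [Kk /mker rBk] := setIP kerBk.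
have: rA k \in rA @* (K :&: 'ker rB) by rewrite mem_morphim ?(subsetP nAK).
rewrite restr_ker_trivial => /set1P rAk.
by rewrite inE (Aut_eq_restr (subsetP sKAut k Kk) (group1 _)) ?morph1.
Qed.

End NonTensor.

Section W0.

Variable H : {group {perm gT}}.
Hypotheses (card_AutA : #|Aut A| = 2) (sHAut : H \subset Aut B).
Hypothesis index_H : #|Aut B : H| = 2.

Lemma card_W0_le : #|W0 G A B H| <= #|Aut B|.
Proof.
have injW : {in W0 G A B H &, injective rB}.
  move=> s t /setIdP[As /eqP eq_s] /setIdP[At /eqP eq_t] eqB.
  apply: Aut_eq_restr => //; apply: card2_group_eq card_AutA _ _ _.
  - exact: (Aut_restr_perm (char_sub chA) As).
  - exact: (Aut_restr_perm (char_sub chA) At).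
  by rewrite eq_s eq_t eqB.
rewrite -(card_in_imset injW); apply: subset_leq_card.
by apply/subsetP=> _ /imsetP[s /setIdP[As _] ->]; exact: (Aut_restr_perm (char_sub chB) As).
Qed.

Hypothesis cyclic_AutB : cyclic (Aut B).
Hypothesis not_tensor :
  cyc_basic K G <> tensor_basic (restr_basic (cyc_basic K G) A)
                                (restr_basic (cyc_basic K G) B).
Hypothesis imK : rB @* K = Aut B.

Let prime_AutA : prime #|Aut A|. Proof. by rewrite card_AutA. Qed.
Let injK := restrB_injective prime_AutA not_tensor.

Lemma card_K_Aut : #|K| = #|Aut B|.
Proof. by rewrite -imK morphimEsub // card_in_imset. Qed.

Lemma sub_W0 : K \subset W0 G A B H.
Proof.
pose K0 := (K :&: 'ker rA)%G.
have card_K0 : (#|K0| * 2)%N = #|Aut B|.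
  rewrite -card_AutA -(restrA_onto prime_AutA not_tensor) card_morphim (setIidPr nAK).
  by rewrite -indexgI Lagrange ?subsetIl // card_K_Aut.
have imK0 : rB @* K0 = H.
  apply/eqP; rewrite (eq_subG_cyclic cyclic_AutB) //; last by rewrite /= -imK morphimS ?subsetIl.
  rewrite /= morphimEsub ?(subset_trans (subsetIl _ _) nBK) // card_in_imset.
    by rewrite -(eqn_pmul2r (isT : 0 < 2)) card_K0 -index_H Lagrange.
  by move=> x y /setIP[Kx _] /setIP[Ky _]; apply: injK.
apply/subsetP=> k Kk; rewrite inE (subsetP sKAut) //= -imK0.
apply/eqP; apply/eqP/idP=> [rAk | /morphimP[k0 _ /setIP[Kk0 /mker rAk0] eqk]].
  by rewrite mem_morphim ?(subsetP nBK) // in_setI Kk; apply/(kerP _ (subsetP nAK k Kk)).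
by rewrite (injK Kk Kk0 eqk).
Qed.

Lemma K_eq_W0 : K :=: W0 G A B H.
Proof. by apply/eqP; rewrite eqEcard sub_W0 card_K_Aut card_W0_le. Qed.

End W0.

End DirectFactors.

Unset Implicit Arguments.
Set Strict Implicit.

Theorem lemma3p1 (gT : finGroupType) (G C3 Cp : {group gT}) (p : nat)
    (K H : {group {perm gT}}) :
  prime p -> 5 <= p ->
  cyclic G -> #|G| = (3 * p)%N ->
  C3 \subset G -> #|C3| = 3 -> Cp \subset G -> #|Cp| = p ->
  H \subset Aut Cp -> #|Aut Cp : H| = 2 ->
  K \subset Aut G ->
  #|restr_basic (cyc_basic K G) Cp| = 2 ->
  cyc_basic K G <> tensor_basic (restr_basic (cyc_basic K G) C3)
                                (restr_basic (cyc_basic K G) Cp) ->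
  cyc_basic K G = cyc_basic (W0 G C3 Cp H) G.
Proof.
move=> pr_p p_ge5 cycG cardG sC3G cardC3 sCpG cardCp sHAut index_H sKAut rank2 not_tensor.
have ch3 : C3 \char G by rewrite sub_cyclic_char.
have chp : Cp \char G by rewrite sub_cyclic_char.
have defG : C3 * Cp = G.
  have co : coprime #|C3| #|Cp|.
    by rewrite cardC3 cardCp prime_coprime // dvdn_prime2 // ltn_eqF // (leq_trans _ p_ge5).
  by apply/eqP; rewrite eqEcard mul_subG //= TI_cardMg ?coprime_TIg // cardG cardC3 cardCp.
have prime_Cp : prime #|Cp| by rewrite cardCp.
have card_AutC3 : #|Aut C3| = 2.
  by rewrite card_Aut_cyclic ?prime_cyclic ?cardC3 // totient_prime.
have imK := im_restr_perm_Aut chp sKAut rank2 prime_Cp.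
by rewrite (K_eq_W0 ch3 chp defG sKAut card_AutC3 sHAut index_H (Aut_prime_cyclic prime_Cp) not_tensor imK).
Qed.
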